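(* Let $\widetilde{C}_4$ be the infinite graph with vertex set $\{0,u,0',d\}\cup\{1,2,3,\dots\}\cup\{-1,-2,-3,\dots\}$ and edge set $\{\{0,u\},\{u,0'\},\{0',d\},\{d,0\}\}\cup\{\{n,n+1\}:n\ge1\}\cup\{\{-n,-n-1\}:n\ge1\}\cup\{\{0',-1\},\{0,1\}\}$. Let $U$ be the Grover walk operator on $\ell^2(A(\widetilde{C}_4))$, let $\Psi_0\in\ell^2(A(\widetilde{C}_4))$ with $\|\Psi_0\|=1$, let $\Psi_t=U^t\Psi_0$, and let $X_t$ be the $\mathbb{Z}$-valued random variable with $\mathbb{P}(X_t=j)=\sum_{v\in V_j}\mu_t(v)$, where $V_j=\{j\}$ for $j\neq0$ and $V_0=\{0,u,0',d\}$. Let $c=((0',u),(u,0),(0,d),(d,0'))$ and let $\bar c=((0',d),(d,0),(0,u),(u,0'))$ be the reversed cycle. For $m\in\{1,2,3,4\}$ put $\Gamma_m=\mathrm{span}\{w^{(m)}(c)-w^{(m)}(\bar c)\}$, and let $\Gamma=\Gamma_1+\Gamma_2+\Gamma_3+\Gamma_4$. Then localization occurs for the sequence of distributions of $X_t$ (that is, there is an integer $j$ with $\limsup_{t\to\infty}\mathbb{P}(X_t=j)>0$) if and only if $\Psi_0\notin\Gamma^{\perp}$.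
   Context: $A(G)=\{(u,v):\{u,v\}\in E(G)\}$ is the set of arcs of $G$; for $e=(u,v)$ write $o(e)=u$, $t(e)=v$ and $\bar e=(v,u)$. The Hilbert space $\ell^2(A(G))$ has the standard basis $\{\delta_e\}_{e\in A(G)}$. The Grover walk operator $U$ on $\ell^2(A(G))$ is defined by $$\langle\delta_f,U\delta_e\rangle=\Big(\tfrac{2}{\deg o(e)}-\delta_{e,\bar f}\Big)\mathbf 1_{\{o(e)=t(f)\}}.$$ The distribution at time $t$ is $\mu_t(v)=\sum_{e:\,o(e)=v}|\Psi_t(e)|^2$. For a path $p=(e_1,\dots,e_n)$ and $m\in\mathbb{N}$, set $w^{(m)}(p)=\sum_{j=1}^n e^{2\pi i m j/n}\delta_{e_j}$; here $n=4$. Localization of a sequence of distributions $\rho_t$ on $\mathbb{Z}$ means that there exists an integer $j$ with $\limsup_{t\to\infty}\rho_t(j)>0$. *)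

From HB Require Import structures.
From mathcomp Require Import all_boot all_order all_algebra.
From mathcomp Require Import complex.
From mathcomp Require Import boolp classical_sets fsbigop reals constructive_ereal
  ereal topology sequences esum.

Set Implicit Arguments.
Unset Strict Implicit.
Unset Printing Implicit Defensive.

Import Order.TTheory GRing.Theory Num.Theory.
Local Open Scope ring_scope.
Local Open Scope classical_set_scope.

(** * The graph  C~_4
   Vertices: [inl n] is the integer vertex n (inl 0 is the vertex 0);
   [inr 0] = u, [inr 1] = 0', [inr 2] = d. *)
Definition vtx : Type := (int + 'I_3)%type.

Definition v0 : vtx := inl 0%Z.
Definition vu : vtx := inr (@Ordinal 3 0 isT).
Definition v0' : vtx := inr (@Ordinal 3 1 isT).
Definition vd : vtx := inr (@Ordinal 3 2 isT).
Definition vint (n : int) : vtx := inl n.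

(** The listed (unordered) edges, each given in one orientation. *)
Definition edge_listed (x y : vtx) : bool :=
  [|| (x == v0) && (y == vu), (x == vu) && (y == v0'),
      (x == v0') && (y == vd), (x == vd) && (y == v0),
      (x == v0') && (y == vint (-1)), (x == v0) && (y == vint 1)
    | match x, y with
      | inl a, inl b => ((1 <= a)%R && (b == a + 1)) || ((a <= -1)%R && (b == a - 1))
      | _, _ => false
      end ].

Definition adj (x y : vtx) : bool := edge_listed x y || edge_listed y x.

Definition arc : Type := {p : vtx * vtx | adj p.1 p.2}.

Definition o (e : arc) : vtx := (val e).1.
Definition t (e : arc) : vtx := (val e).2.

Definition deg (v : vtx) : nat := \big[addn/0%N]_(w \in [set w | adj v w]) 1%N.

Section Walk.
Variable R : realType.
Local Notation C := R[i].
Local Open Scope complex_scope.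

Definition sqabs (z : C) : R := complex.Re z ^+ 2 + complex.Im z ^+ 2.

Definition state := arc -> C.

(** Grover walk:  <delta_f, U delta_e> = (2/deg o(e) - [e = rev f]) 1{o(e) = t(f)},
    hence (U Psi)(f) = sum_{e : o(e) = t(f)} (2/deg o(e) - [e = rev f]) Psi(e)
    (a finite sum since the graph is locally finite). *)
Definition grover (Psi : state) : state := fun f =>
  \sum_(e \in [set e : arc | o e = t f])
     ((2%:R / (deg (o e))%:R) - ((val e == (t f, o f)) : bool)%:R) * Psi e.

Definition Psi_t (Psi0 : state) (n : nat) : state := iter n grover Psi0.

Definition mu (Psi0 : state) (n : nat) (v : vtx) : R :=
  \sum_(e \in [set e : arc | o e = v]) sqabs (Psi_t Psi0 n e).

Definition Vset (j : int) : set vtx :=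
  if j == 0 then [set v0; vu; v0'; vd] else [set vint j].

Definition probX (Psi0 : state) (n : nat) (j : int) : R :=
  \sum_(v \in Vset j) mu Psi0 n v.

Definition sqnorm (Psi : state) : \bar R :=
  \esum_(e in [set: arc]) (sqabs (Psi e))%:E.

(** inner product <gamma, Psi> for a finitely supported gamma *)
Definition inner_fin (gamma Psi : state) : C :=
  \sum_(e \in [set: arc]) (gamma e)^* * Psi e.

(** w^(m)(p) for a path p = (e_1,...,e_4) of length n = 4:
    sum_j exp(2 pi i m j / 4) delta_{e_j} = sum_j i^(m j) delta_{e_j} *)
Definition wm (m : nat) (p : 4.-tuple arc) : state := fun e =>
  \sum_(j < 4) ('i ^+ (m * j.+1)) * ((e == tnth p j) : bool)%:R.

End Walk.

Definition mkarc (x y : vtx) (h : adj x y) : arc := exist _ (x, y) h.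

Definition c_cycle : 4.-tuple arc :=
  [tuple @mkarc v0' vu isT; @mkarc vu v0 isT; @mkarc v0 vd isT; @mkarc vd v0' isT].
Definition cbar_cycle : 4.-tuple arc :=
  [tuple @mkarc v0' vd isT; @mkarc vd v0 isT; @mkarc v0 vu isT; @mkarc vu v0' isT].

Section Gamma.
Variable R : realType.
Local Open Scope complex_scope.

Definition gam (m : nat) : state R := fun e => wm R m c_cycle e - wm R m cbar_cycle e.

Definition inGamma (gamma : state R) : Prop :=
  exists a : 'I_4 -> R[i], gamma = fun e => \sum_(m < 4) a m * gam m.+1 e.

Definition inGamma_perp (Psi : state R) : Prop :=
  forall gamma, inGamma gamma -> inner_fin gamma Psi = 0.

Definition localization (Psi0 : state R) : Prop :=
  exists j : int, (0 < limn_esup (fun n => (probX Psi0 n j)%:E))%E.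
End Gamma.

(* Let d_j be the difference of the amplitudes on the j-th arcs of c and of the
   reversed cycle. A Grover step rotates (d_j) cyclically, so sum_j |d_j|^2 is
   conserved, and the inner products of a state with the generators of Gamma are
   the discrete Fourier coefficients of (d_j); hence Psi0 is in Gamma^perp iff d = 0.
   If d <> 0, the conserved quantity bounds P(X_t = 0) from below by
   sum_j |d_j|^2 / 2. If d = 0 the reversed cycle merely copies the cycle, and two
   steps around the cycle contract the cycle amplitudes by the factor 1/3 up to the
   inflow from the two tails. That inflow is a tail of the square-summable initial
   state, so it vanishes, hence so do the cycle amplitudes, the outflow into the
   tails, and every P(X_t = j). *)

From Pilot Require Import Defs.
From HB Require Import structures.
From mathcomp Require Import all_boot all_order all_algebra complex.
From mathcomp Require Import boolp classical_sets fsbigop reals constructive_ereal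
  ereal topology normedtype sequences esum.
From mathcomp Require Import zify ring lra.

Set Implicit Arguments.
Unset Strict Implicit.
Unset Printing Implicit Defensive.

Import Order.TTheory GRing.Theory Num.Theory ComplexField.Normc.
Import numFieldNormedType.Exports.
Local Open Scope ring_scope.
Local Open Scope classical_set_scope.

Local Notation arc := Defs.arc.

Section DiscreteFourier.
Variables (F : idomainType) (n : nat) (z : F).
Hypothesis prim_z : n.-primitive_root z.

Lemma sum_expr_unity (w : F) : w ^+ n = 1 ->
  \sum_(m < n) w ^+ m.+1 = if w == 1 then n%:R else 0.
Proof.
move=> wn; have [->|w1] := eqVneq w 1.
  by rewrite (eq_bigr (fun=> 1)) => [|m _]; rewrite ?sumr_const ?card_ord ?expr1n.
have /eqP : (w - 1) * \sum_(m < n) w ^+ m = 0 by rewrite -subrX1 wn subrr.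
rewrite mulf_eq0 subr_eq0 (negbTE w1) /= => /eqP sum0.
by under eq_bigr do rewrite exprS; rewrite -mulr_sumr sum0 mulr0.
Qed.

Lemma dft_eq0 (y : 'I_n -> F) :
  (forall m : 'I_n, \sum_(j < n) z ^+ (m.+1 * j.+1) * y j = 0) -> forall k, y k = 0.
Proof.
move=> hy k; pose w (j : 'I_n) := z ^+ (n - k.+1 + j.+1).
have wn j : w j ^+ n = 1 by rewrite -exprM mulnC exprM (prim_expr_order prim_z) expr1n.
have w1 (j : 'I_n) : (w j == 1) = (j == k).
  rewrite -(expr0 z) (eq_prim_root_expr prim_z) mod0n -val_eqE /=.
  have := ltn_ord j; have := ltn_ord k; have [kj|jk] := leqP k j => kn jn.
    by rewrite (_ : n - k.+1 + j.+1 = j - k + n)%N ?modnDr ?modn_small; lia.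
  by rewrite modn_small; lia.
(* Weighting the m-th equation by z^((m+1)(n-k-1)) and summing over m isolates
   n * y k, by the orthogonality relations of the characters j |-> z^(m j). *)
have : \sum_(m < n) z ^+ (m.+1 * (n - k.+1)) * \sum_(j < n) z ^+ (m.+1 * j.+1) * y j = 0.
  by apply: big1 => m _; rewrite hy mulr0.
rewrite (eq_bigr (fun m : 'I_n => \sum_(j < n) w j ^+ m.+1 * y j)); last first.
  move=> m _; rewrite mulr_sumr; apply: eq_bigr => j _.
  by rewrite mulrA -exprD -mulnDr mulnC exprM.
rewrite exchange_big /=.
under eq_bigr do rewrite -mulr_suml sum_expr_unity // w1.
rewrite (bigD1 k) //= eqxx big1 => [|j /negbTE ->]; last by rewrite mul0r.
rewrite addr0 => /eqP; rewrite mulf_eq0 (negbTE (prim_root_natf_neq0 prim_z)) /=.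
by move/eqP.
Qed.
End DiscreteFourier.

Lemma prim_root_i (R : rcfType) : 4.-primitive_root ('i%C : R[i]).
Proof.
have Re_neq1 (x : R[i]) : complex.Re x != 1 -> (x == 1) = false.
  by apply: contraNF => /eqP ->.
apply/andP; split => //; apply/forallP => -[[|[|[|[|//]]]] ?]; rewrite /= unity_rootE.
- by rewrite expr1 Re_neq1 //= eq_sym oner_eq0.
- by rewrite sqr_i Re_neq1 //=; apply/eqP; lra.
- by rewrite exprSr sqr_i mulN1r Re_neq1 //= oppr0 eq_sym oner_eq0.
- by rewrite (exprM _ 2 2) sqr_i sqrrN expr1n !eqxx.
Qed.

Section Vanishing.
Variable R : realType.
Implicit Types u v d : nat -> R.

(* [limsup u <= 0] in epsilon form; for the nonnegative sequences below this is
   convergence to 0. *)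
Definition vanishing u := forall e, 0 < e -> \forall n \near \oo, u n <= e.

Lemma vanishing_le u v : (forall n, v n <= u n) -> vanishing u -> vanishing v.
Proof. by move=> vu hu e /hu; apply: filterS => n; apply: le_trans. Qed.

Lemma vanishingD u v : vanishing u -> vanishing v -> vanishing (fun n => u n + v n).
Proof.
move=> hu hv e e0; have e2 : 0 < e / 2 by rewrite divr_gt0.
by apply: filterS2 (hu _ e2) (hv _ e2) => n; lra.
Qed.

Lemma vanishingZ c u : 0 <= c -> vanishing u -> vanishing (fun n => c * u n).
Proof.
move=> c0 hu e e0; have ec : 0 < e / (c + 1) by rewrite divr_gt0 // ltr_wpDl.
apply: filterS (hu _ ec) => n /(ler_wpM2l c0) /le_trans; apply.
by rewrite mulrA ler_pdivrMr ?ltr_wpDl // mulrDr mulr1 mulrC lerDl ltW.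
Qed.

Lemma vanishing_shift k u : vanishing (fun n => u (n + k)%N) <-> vanishing u.
Proof.
split=> hu e /hu [N _ hN]; last by exists N => // n /= Nn; apply: hN => /=; lia.
exists (N + k)%N => // n /= Nn; have := hN (n - k)%N; rewrite subnK; last by lia.
by apply => /=; lia.
Qed.

Lemma vanishing_sqr u : (forall n, 0 <= u n) ->
  vanishing (fun n => u n ^+ 2) <-> vanishing u.
Proof.
move=> u0; split=> hu e e0.
  by apply: filterS (hu _ (exprn_gt0 2 e0)) => n; rewrite ler_sqr ?nnegrE ?u0 // ltW.
have m0 : 0 < Num.min e 1 by rewrite lt_min e0 ltr01.
apply: filterS (hu _ m0) => n; rewrite le_min => /andP [ue u1].
by rewrite expr2 -[e]mulr1; apply: ler_pM.
Qed.

(* The constant 3 is the inverse contraction factor of two Grover steps on the cycle. *)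
Lemma vanishing_rec2 u d : (forall n, 0 <= u n) ->
  (forall n, 3%:R * u n.+2 <= u n + d n) -> vanishing d -> vanishing u.
Proof.
move=> u0 rec hd e e0; have [N _ hN] := hd _ e0.
pose B k : R := (u N + u N.+1) / 3%:R ^+ k.
have B0 k : 0 <= B k by rewrite divr_ge0 ?addr_ge0 // exprn_ge0.
have BS k : 3%:R * B k.+1 = B k by rewrite /B exprS; field; rewrite expf_neq0 // pnatr_eq0.
have B_le k j : (k <= j)%N -> B j <= B k.
  move/subnK <-; elim: (j - k)%N => [|i IH]; rewrite ?add0n //= addSn.
  by have := BS (i + k)%N; have := B0 (i + k).+1; lra.
have bound m : u (N + m)%N <= B m./2 + e / 2.
  elim/ltn_ind: m => -[|[|m]] IH.
  - by rewrite addn0 /B expr0 divr1; have := u0 N.+1; lra.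
  - by rewrite addn1 /B expr0 divr1; have := u0 N; lra.
  have := rec (N + m)%N; have := hN (N + m)%N (leq_addr _ _); have := IH m (ltnW (ltnSn _)).
  by rewrite /= -BS !addnS; lra.
have [k Bk] : exists k, B k <= e / 2.
  have [k kC] : exists k : nat, (u N + u N.+1) / (e / 2) < k%:R.
    by eexists; apply/archi_boundP/divr_ge0; [exact: addr_ge0 | exact/ltW/divr_gt0].
  exists k; rewrite /B ler_pdivrMr ?exprn_gt0 // mulrC -ler_pdivrMr ?divr_gt0 //.
  by apply: (le_trans (ltW kC)); rewrite -natrX ler_nat ltnW // ltn_expl.
exists (N + k.*2)%N => // n /= Nn; rewrite -(subnKC (leq_trans (leq_addr _ _) Nn)).
have : (k <= (n - N)./2)%N by rewrite -[k]doubleK half_leq // leq_subRL // (leq_trans (leq_addr _ _) Nn).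
by move/B_le; have := bound (n - N)%N; lra.
Qed.

Lemma vanishing_sum k (F : 'I_k -> nat -> R) :
  (forall i, vanishing (F i)) -> vanishing (fun n => \sum_(i < k) F i n).
Proof.
elim: k F => [|k IH] F hF.
  by move=> e e0; apply: nearW => n; rewrite big_ord0 ltW.
under [fun n => _]funext do rewrite big_ord_recr.
exact: vanishingD (IH _ (fun i => hF _)) (hF _).
Qed.

Lemma vanishing_limn_esup u : vanishing u -> (limn_esup (fun n => (u n)%:E) <= 0)%E.
Proof.
move=> hu; apply/lee_addgt0Pr => e e0; rewrite add0e limn_esup_lim.
apply: lime_le; first exact: is_cvg_esups.
have [N _ hN] := hu _ e0; exists N => // n /= Nn.
apply: ge_ereal_sup => _ [k /= nk <-]; rewrite lee_fin; apply: hN => /=.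
exact: leq_trans nk.
Qed.

Lemma limn_esup_ge c u : (forall n, c <= u n) -> (c%:E <= limn_esup (fun n => (u n)%:E))%E.
Proof.
move=> cu; rewrite limn_esup_lim; apply: lime_ge; first exact: is_cvg_esups.
exists 0%N => // n _; apply: (@le_trans _ _ (u n)%:E); first by rewrite lee_fin.
by apply: ereal_sup_ubound; exists n => /=.
Qed.
End Vanishing.

Section Amplitudes.
Variable R : realType.
Implicit Types x y z : R[i].

Lemma normc_ge0 x : 0 <= normc x.
Proof. by case: x => a b; rewrite /= sqrtr_ge0. Qed.

Lemma sqabsE x : sqabs x = normc x ^+ 2.
Proof. by case: x => a b; rewrite /sqabs /= sqr_sqrtr // addr_ge0 // sqr_ge0. Qed.

Lemma sqabs_ge0 x : 0 <= sqabs x.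
Proof. by rewrite sqabsE sqr_ge0. Qed.

Lemma sqabs_eq0 x : (sqabs x == 0) = (x == 0).
Proof.
rewrite sqabsE expf_eq0 /=; apply/eqP/eqP => [/eq0_normc //|->].
by rewrite normc0.
Qed.

Lemma sqabs_sub_le x y : sqabs (x - y) <= 2%:R * (sqabs x + sqabs y).
Proof.
case: x => a b; case: y => c d; rewrite /sqabs /=.
by have := sqr_ge0 (a + c); have := sqr_ge0 (b + d); rewrite !expr2; nra.
Qed.

Lemma normc_divn x n : normc (x / n%:R) = normc x / n%:R.
Proof. by rewrite normcM normcV normcMn normc1. Qed.

Lemma normc_avg3 x y : normc ((x + 2%:R * y) / 3%:R) <= (normc x + 2%:R * normc y) / 3%:R.
Proof.
rewrite normc_divn ler_pM2r ?invr_gt0 ?ltr0n //.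
by apply: le_trans (le_normcD _ _) _; rewrite normcM normcMn normc1.
Qed.

Lemma normc_scatter3 x y z :
  normc ((2%:R / 3%:R - 1) * x + 2%:R / 3%:R * (y + z)) <= normc x + normc y + normc z.
Proof.
have -> : (2%:R / 3%:R - 1) * x + 2%:R / 3%:R * (y + z) = (2%:R * (y + z) - x) / 3%:R.
  by field.
rewrite normc_divn ler_pdivrMr ?ltr0n //.
have := le_normcD (2%:R * (y + z)) (- x); have := le_normcD y z.
rewrite normcN normcM normcMn normc1.
have := normc_ge0 x; have := normc_ge0 y; have := normc_ge0 z; lra.
Qed.

Lemma vanishing_sqabs (f : nat -> R[i]) :
  vanishing (fun n => sqabs (f n)) <-> vanishing (fun n => normc (f n)).
Proof.
rewrite -(vanishing_sqr (u := fun n => normc (f n))) => [|n]; last exact: normc_ge0.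
by split; apply: vanishing_le => n; rewrite sqabsE.
Qed.

Lemma sqnorm_fin_vanishing (Psi : state R) (f : nat -> arc) : injective f ->
  (sqnorm Psi < +oo)%E -> vanishing (fun k => sqabs (Psi (f k))).
Proof.
move=> finj fin; pose x k := sqabs (Psi (f k)).
have sqnorm_fin : sqnorm Psi \is a fin_num.
  by rewrite ge0_fin_numE //; apply: esum_ge0 => e _; rewrite lee_fin sqabs_ge0.
have partial_le N : \sum_(k < N) x k <= fine (sqnorm Psi).
  have uniq_f : uniq (map f (iota 0 N)) by rewrite map_inj_uniq // iota_uniq.
  have : (\sum_(e \in [set` map f (iota 0 N)]) (sqabs (Psi e))%:E <= sqnorm Psi)%E.
    apply: ereal_sup_ubound; exists [set` map f (iota 0 N)] => //.
    by rewrite /fsets /=; split.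
  rewrite -(fineK sqnorm_fin) -fsbig_seq // big_map sumEFin lee_fin.
  by rewrite -(big_mkord xpredT x) /index_iota subn0.
have : cvgn (series x).
  apply: nondecreasing_is_cvgn.
    by apply/nondecreasing_seqP => n; rewrite /series /= big_nat_recr //= lerDl sqabs_ge0.
  by exists (fine (sqnorm Psi)) => _ [n _ <-]; rewrite /series /= big_mkord.
move/cvg_series_cvg_0/cvgr0Pnorm_le => x0 e /x0 [N _ hN].
by exists N => // n /hN /=; rewrite ger0_norm ?sqabs_ge0.
Qed.
End Amplitudes.

(* [vneg k] is the vertex -(k+1). *)
Local Notation vpos k := (inl (Posz k) : vtx).
Local Notation vneg k := (inl (Negz k) : vtx).

Definition neighbours (x : vtx) : seq vtx :=
  match x with
  | inl (Posz 0) => [:: vu; vd; vpos 1]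
  | inl (Posz k.+1) => [:: vpos k.+2; vpos k]
  | inl (Negz 0) => [:: vneg 1; v0']
  | inl (Negz k.+1) => [:: vneg k.+2; vneg k]
  | inr i => match val i with
             | 0 => [:: v0; v0']
             | 1 => [:: vu; vd; vneg 0]
             | _ => [:: v0'; v0]
             end
  end.

Lemma inl_eq (a b : int) : (inl a == inl b :> vtx) = (a == b).
Proof. by apply/eqP/eqP => [[]|->]. Qed.

Lemma mem_neighbours x y : (y \in neighbours x) = adj x y.
Proof.
case: x => [[[|k]|[|k]] | [[|[|[|?]]] ?]];
case: y => [[[|m]|[|m]] | [[|[|[|?]]] ?]];
rewrite /adj /edge_listed /vint /= ?inE /= ?inl_eq ?NegzE //; lia.
Qed.

Lemma uniq_neighbours x : uniq (neighbours x).
Proof. by case: x => [[[|k]|[|k]] | [[|[|[|?]]] ?]] //=; rewrite ?inE ?inl_eq ?NegzE; lia. Qed.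

Lemma adj_sym x y : adj x y = adj y x.
Proof. exact: orbC. Qed.

Definition arc_of (x y : vtx) : arc := insubd (mkarc (x:=v0) (y:=vu) isT) (x, y).

Lemma val_arc_of x y : adj x y -> val (arc_of x y) = (x, y).
Proof. by move=> h; rewrite /arc_of insubdK. Qed.

Lemma big_out_arcs (T : eqType) (idx : T) (op : Monoid.com_law idx) v (F : arc -> T) :
  \big[op/idx]_(e \in [set e : arc | o e = v]) F e =
  \big[op/idx]_(w <- neighbours v) F (arc_of v w).
Proof.
have out_arc (e : arc) : o e = v -> arc_of v (t e) = e.
  move=> <-; apply: val_inj; rewrite val_arc_of; last exact: (valP e).
  by rewrite /o /t; case: (val e).
have val_out w : w \in neighbours v -> val (arc_of v w) = (v, w).
  by rewrite mem_neighbours; exact: val_arc_of.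
rewrite -(big_map (arc_of v) xpredT) (fsbig_fwiden (map (arc_of v) (neighbours v))) //.
- move=> e /= oe; apply/mapP; exists (t e); last by rewrite out_arc.
  by rewrite mem_neighbours -oe; exact: (valP e).
- rewrite map_inj_in_uniq ?uniq_neighbours // => w1 w2 h1 h2 /(congr1 val).
  by rewrite !val_out // => -[].
- by move=> e [/= /mapP [w wn ->]] []; rewrite /o val_out.
Qed.

Lemma deg_neighbours v : deg v = size (neighbours v).
Proof.
rewrite /deg (fsbig_fwiden (neighbours v)) ?uniq_neighbours ?sum1_size //.
- by move=> w /=; rewrite mem_neighbours.
- by move=> w [/=]; rewrite mem_neighbours.
Qed.

Lemma perm_eq_swap (T : eqType) (a b : T) : perm_eq [:: a; b] [:: b; a].
Proof. by rewrite -[[:: a; b]]/([:: a] ++ [:: b]) perm_catC. Qed.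

Section GroverLocal.
Variable R : realType.
Implicit Type Psi : state R.

Lemma grover_arc_of Psi x y : adj x y -> grover Psi (arc_of x y) =
  \sum_(w <- neighbours y) (2%:R / (size (neighbours y))%:R - (w == x)%:R) * Psi (arc_of y w).
Proof.
move=> xy; rewrite /grover big_out_arcs /t /o val_arc_of //= big_seq [RHS]big_seq.
apply: eq_bigr => w; rewrite mem_neighbours => yw.
by rewrite val_arc_of //= deg_neighbours xpair_eqE eqxx.
Qed.

Lemma grover_deg2 Psi x y z : perm_eq (neighbours y) [:: x; z] ->
  grover Psi (arc_of x y) = Psi (arc_of y z).
Proof.
move=> nby; have : uniq [:: x; z] by rewrite -(perm_uniq nby) uniq_neighbours.
rewrite /= inE andbT => xz.
have xy : adj x y by rewrite adj_sym -mem_neighbours (perm_mem nby) inE eqxx.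
rewrite grover_arc_of // (perm_big _ nby) (perm_size nby) /= !big_cons big_nil.
rewrite eqxx eq_sym (negbTE xz) divff ?pnatr_eq0 //=; ring.
Qed.

Lemma grover_deg3 Psi x y z1 z2 : perm_eq (neighbours y) [:: x; z1; z2] ->
  grover Psi (arc_of x y) = (2%:R / 3%:R - 1) * Psi (arc_of y x) +
                            2%:R / 3%:R * (Psi (arc_of y z1) + Psi (arc_of y z2)).
Proof.
move=> nby; have : uniq [:: x; z1; z2] by rewrite -(perm_uniq nby) uniq_neighbours.
rewrite /= !inE negb_or => /and3P [/andP [xz1 xz2] _ _].
have xy : adj x y by rewrite adj_sym -mem_neighbours (perm_mem nby) inE eqxx.
rewrite grover_arc_of // (perm_big _ nby) (perm_size nby) /= !big_cons big_nil.
rewrite eqxx ![_ == x]eq_sym (negbTE xz1) (negbTE xz2) /=; ring.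
Qed.
End GroverLocal.

(* In [grover] the amplitude of an arc [e] moves to the arcs [f] with [t f = o e],
   i.e. against the orientation: amplitude on [right_in k] travels towards the
   cycle and amplitude on [right_out k] away from it. *)
Definition right_in k := arc_of (vpos k.+1) (vpos k.+2).
Definition right_out k := arc_of (vpos k.+1) (vpos k).
Definition left_in k := arc_of (vneg k) (vneg k.+1).
Definition left_out k := arc_of (vneg k) (if k is k'.+1 then vneg k' else v0').
Definition hub_right := arc_of v0 (vpos 1).
Definition hub_left := arc_of v0' (vneg 0).

Local Notation a1 := (arc_of v0' vu).
Local Notation a2 := (arc_of vu v0).
Local Notation a3 := (arc_of v0 vd).
Local Notation a4 := (arc_of vd v0').
Local Notation b1 := (arc_of v0' vd).
Local Notation b2 := (arc_of vd v0).
Local Notation b3 := (arc_of v0 vu).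
Local Notation b4 := (arc_of vu v0').

Lemma c_cycleE : c_cycle = [tuple a1; a2; a3; a4].
Proof. by apply: eq_from_tnth => -[[|[|[|[|//]]]] ?]; apply: val_inj; rewrite /= val_arc_of. Qed.

Lemma cbar_cycleE : cbar_cycle = [tuple b1; b2; b3; b4].
Proof. by apply: eq_from_tnth => -[[|[|[|[|//]]]] ?]; apply: val_inj; rewrite /= val_arc_of. Qed.

Definition cycle_diff (R : realType) (Psi : state R) (j : 'I_4) : R[i] :=
  Psi (tnth c_cycle j) - Psi (tnth cbar_cycle j).

Section GroverLaws.
Variables (R : realType) (Psi : state R).
Local Notation G := (grover Psi).

Lemma grover_right_in k : G (right_in k) = Psi (right_in k.+1).
Proof. exact/grover_deg2/perm_eq_swap. Qed.

Lemma grover_right_out k : G (right_out k.+1) = Psi (right_out k).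
Proof. exact/grover_deg2/perm_refl. Qed.

Lemma grover_hub_right : G hub_right = Psi (right_in 0).
Proof. exact/grover_deg2/perm_eq_swap. Qed.

Lemma grover_right_out0 : G (right_out 0) =
  (2%:R / 3%:R - 1) * Psi hub_right + 2%:R / 3%:R * (Psi b3 + Psi a3).
Proof. exact: grover_deg3. Qed.

Lemma grover_left_in k : G (left_in k) = Psi (left_in k.+1).
Proof. exact/grover_deg2/perm_eq_swap. Qed.

Lemma grover_left_out k : G (left_out k.+1) = Psi (left_out k).
Proof. by case: k => [|k]; exact/grover_deg2/perm_refl. Qed.

Lemma grover_hub_left : G hub_left = Psi (left_in 0).
Proof. exact/grover_deg2/perm_eq_swap. Qed.

Lemma grover_left_out0 : G (left_out 0) =
  (2%:R / 3%:R - 1) * Psi hub_left + 2%:R / 3%:R * (Psi a1 + Psi b1).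
Proof. exact: grover_deg3. Qed.

Lemma grover_a1 : G a1 = Psi a2. Proof. exact/grover_deg2/perm_eq_swap. Qed.
Lemma grover_b1 : G b1 = Psi b2. Proof. exact/grover_deg2/perm_refl. Qed.
Lemma grover_a3 : G a3 = Psi a4. Proof. exact/grover_deg2/perm_eq_swap. Qed.
Lemma grover_b3 : G b3 = Psi b4. Proof. exact/grover_deg2/perm_refl. Qed.

Lemma grover_a2 : G a2 = (2%:R / 3%:R - 1) * Psi b3 + 2%:R / 3%:R * (Psi a3 + Psi hub_right).
Proof. exact: grover_deg3. Qed.
Lemma grover_b2 : G b2 = (2%:R / 3%:R - 1) * Psi a3 + 2%:R / 3%:R * (Psi b3 + Psi hub_right).
Proof. exact: grover_deg3. Qed.
Lemma grover_a4 : G a4 = (2%:R / 3%:R - 1) * Psi b1 + 2%:R / 3%:R * (Psi a1 + Psi hub_left).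
Proof. exact: grover_deg3. Qed.
Lemma grover_b4 : G b4 = (2%:R / 3%:R - 1) * Psi a1 + 2%:R / 3%:R * (Psi b1 + Psi hub_left).
Proof. exact: grover_deg3. Qed.

Lemma cycle_diff_grover j : cycle_diff G j = cycle_diff Psi (ordS j).
Proof.
rewrite /cycle_diff c_cycleE cbar_cycleE.
case: j => -[|[|[|[|//]]]] ?; rewrite /= ?grover_a1 ?grover_b1 ?grover_a2 ?grover_b2
  ?grover_a3 ?grover_b3 ?grover_a4 ?grover_b4; ring.
Qed.
End GroverLaws.

Definition cycle_arcs : seq arc := c_cycle ++ cbar_cycle.

Lemma uniq_cycle_arcs : uniq cycle_arcs.
Proof. by []. Qed.

Section Gamma.
Variable R : realType.
Local Notation C := R[i].
Implicit Type Psi : state R.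

Lemma gam_c m j : gam R m (tnth c_cycle j) = 'i%C ^+ (m * j.+1).
Proof.
rewrite /gam /wm !big_ord_recl !big_ord0.
by case: j => -[|[|[|[|//]]]] ? /=; rewrite /bump /= !mulr0 ?mulr1 !addr0 ?add0r subr0.
Qed.

Lemma gam_cbar m j : gam R m (tnth cbar_cycle j) = - 'i%C ^+ (m * j.+1).
Proof.
rewrite /gam /wm !big_ord_recl !big_ord0.
by case: j => -[|[|[|[|//]]]] ? /=; rewrite /bump /= !mulr0 ?mulr1 !addr0 ?add0r ?sub0r.
Qed.

Lemma gam_out m e : e \notin cycle_arcs -> gam R m e = 0.
Proof.
rewrite mem_cat negb_or => /andP [ec ecb].
have off (p : 4.-tuple arc) j : e \notin p -> (e == tnth p j)%:R = 0 :> C.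
  by move=> ep; apply/eqP; rewrite pnatr_eq0 eqb0; apply: contra ep => /eqP ->; exact: mem_tnth.
by rewrite /gam /wm !big1 ?subrr // => j _; rewrite off ?mulr0.
Qed.

Lemma inner_fin_seq (gamma Psi : state R) (s : seq arc) : uniq s ->
  (forall e, e \notin s -> gamma e = 0) ->
  inner_fin gamma Psi = \sum_(e <- s) (gamma e)^* * Psi e.
Proof.
move=> us gamma_s; rewrite /inner_fin -(fsbig_widen [set` s]) //.
  by rewrite -fsbig_seq.
by move=> e [_ /negP es] /=; rewrite gamma_s // conjC0 mul0r.
Qed.

Lemma inner_fin_cycle (gamma Psi : state R) :
  (forall e, e \notin cycle_arcs -> gamma e = 0) ->
  (forall j, gamma (tnth cbar_cycle j) = - gamma (tnth c_cycle j)) ->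
  inner_fin gamma Psi = \sum_(j < 4) (gamma (tnth c_cycle j))^* * cycle_diff Psi j.
Proof.
move=> gamma_out gamma_cbar.
rewrite (inner_fin_seq _ uniq_cycle_arcs gamma_out) big_cat /= !big_tuple -big_split /=.
by apply: eq_bigr => j _; rewrite gamma_cbar rmorphN /cycle_diff /=; ring.
Qed.

Lemma inGamma_gam (m : 'I_4) : inGamma (gam R m.+1).
Proof.
exists (fun k => (k == m)%:R); apply/funext => e.
by rewrite (bigD1 m) //= eqxx mul1r big1 ?addr0 // => k /negbTE ->; rewrite mul0r.
Qed.

Lemma perp_GammaP Psi : inGamma_perp Psi <-> forall j, cycle_diff Psi j = 0.
Proof.
split => [perp | d0 _ [a ->]]; last first.
  rewrite inner_fin_cycle => [|e he|j]; first by rewrite big1 // => j _; rewrite d0 mulr0.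
    by apply: big1 => m _; rewrite gam_out ?mulr0.
  by rewrite -sumrN; apply: eq_bigr => m _; rewrite gam_c gam_cbar mulrN.
suff : forall j, (cycle_diff Psi j)^* = 0 by move=> h j; apply/eqP; rewrite -conjC_eq0 h.
apply: (dft_eq0 (prim_root_i R)) => m.
have := perp _ (inGamma_gam m).
rewrite inner_fin_cycle => [|e|j]; [|exact: gam_out|by rewrite gam_c gam_cbar].
move=> /(congr1 Num.conj); rewrite conjC0 rmorph_sum => sum0; rewrite -[RHS]sum0.
by apply: eq_bigr => j _; rewrite gam_c rmorphM /= conjCK.
Qed.
End Gamma.


Lemma adj_right_in k : adj (vpos k.+1) (vpos k.+2).
Proof. by rewrite -mem_neighbours /= ?inE eqxx. Qed.

Lemma adj_left_in k : adj (vneg k) (vneg k.+1).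
Proof. by rewrite adj_sym -mem_neighbours /= ?inE eqxx ?orbT. Qed.

Lemma right_in_inj : injective right_in.
Proof. by move=> k l /(congr1 val); rewrite !val_arc_of ?adj_right_in // => -[]. Qed.

Lemma left_in_inj : injective left_in.
Proof. by move=> k l /(congr1 val); rewrite !val_arc_of ?adj_left_in // => -[]. Qed.

Section Evolution.
Variables (R : realType) (Psi0 : state R).
Local Notation P t := (Psi_t Psi0 t).

Lemma Psi_tS t : P t.+1 = grover (P t).
Proof. by []. Qed.

Lemma Psi_t_right_in t k : P t (right_in k) = Psi0 (right_in (k + t)).
Proof. by elim: t k => [|t IH] k; rewrite ?addn0 // Psi_tS grover_right_in IH addSnnS. Qed.

Lemma Psi_t_left_in t k : P t (left_in k) = Psi0 (left_in (k + t)).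
Proof. by elim: t k => [|t IH] k; rewrite ?addn0 // Psi_tS grover_left_in IH addSnnS. Qed.

Lemma Psi_t_hub_right t : P t.+1 hub_right = Psi0 (right_in t).
Proof. by rewrite Psi_tS grover_hub_right Psi_t_right_in. Qed.

Lemma Psi_t_hub_left t : P t.+1 hub_left = Psi0 (left_in t).
Proof. by rewrite Psi_tS grover_hub_left Psi_t_left_in. Qed.

Lemma mu_neighbours t v : mu Psi0 t v = \sum_(w <- neighbours v) sqabs (P t (arc_of v w)).
Proof. exact: big_out_arcs. Qed.

Lemma probX_pos t k : probX Psi0 t (Posz k.+1) = sqabs (P t (right_in k)) + sqabs (P t (right_out k)).
Proof. by rewrite /probX /Vset /= fsbig_set1 mu_neighbours /= !big_cons big_nil addr0. Qed.

Lemma probX_neg t k : probX Psi0 t (Negz k) = sqabs (P t (left_in k)) + sqabs (P t (left_out k)).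
Proof. by case: k => [|k]; rewrite /probX /Vset /= fsbig_set1 mu_neighbours /= !big_cons big_nil addr0. Qed.

Lemma probX_hub t : probX Psi0 t 0 =
  \sum_(j < 4) (sqabs (P t (tnth c_cycle j)) + sqabs (P t (tnth cbar_cycle j))) +
  (sqabs (P t hub_right) + sqabs (P t hub_left)).
Proof.
rewrite /probX /Vset /= (fsbig_fwiden [:: v0; vu; v0'; vd]) //=.
- rewrite !big_cons big_nil !mu_neighbours /= !big_cons !big_nil c_cycleE cbar_cycleE.
  by rewrite !big_ord_recl big_ord0 /=; ring.
- by move=> x [[[->|->]|->]|->] /=; rewrite !inE eqxx ?orbT.
- move=> x [/= + []]; rewrite !inE.
  by case/or4P => /eqP ->; [left; left; left | left; left; right | left; right | right].
Qed.
End Evolution.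

Definition cycle_energy (R : realType) (Psi : state R) : R :=
  \sum_(j < 4) sqabs (cycle_diff Psi j).

Lemma cycle_energy_grover (R : realType) (Psi : state R) :
  cycle_energy (grover Psi) = cycle_energy Psi.
Proof.
rewrite /cycle_energy; under eq_bigr do rewrite cycle_diff_grover.
by rewrite [RHS](reindex_inj (@ordS_inj 4)).
Qed.

Lemma cycle_energy_Psi_t (R : realType) (Psi0 : state R) t :
  cycle_energy (Psi_t Psi0 t) = cycle_energy Psi0.
Proof. by elim: t => // t IH; rewrite Psi_tS cycle_energy_grover. Qed.

Lemma cycle_energy_ge0 (R : realType) (Psi : state R) : 0 <= cycle_energy Psi.
Proof. by apply: sumr_ge0 => j _; exact: sqabs_ge0. Qed.

Lemma cycle_energy_eq0 (R : realType) (Psi : state R) :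
  cycle_energy Psi = 0 <-> forall j, cycle_diff Psi j = 0.
Proof.
split=> [/psumr_eq0P E0 j | d0]; last by rewrite /cycle_energy big1 // => j _; rewrite d0 sqabsE normc0 expr0n.
by apply/eqP; rewrite -sqabs_eq0 E0 // => i _; exact: sqabs_ge0.
Qed.

Lemma cycle_energy_le_probX (R : realType) (Psi0 : state R) t :
  cycle_energy (Psi_t Psi0 t) <= 2%:R * probX Psi0 t 0.
Proof.
rewrite probX_hub mulrDr; apply: ler_wpDr; first by rewrite mulr_ge0 // addr_ge0 // sqabs_ge0.
by rewrite mulr_sumr; apply: ler_sum => j _; exact: sqabs_sub_le.
Qed.

Section ZeroCycleEnergy.
Variables (R : realType) (Psi0 : state R).
Hypotheses (fin : (sqnorm Psi0 < +oo)%E) (E0 : cycle_energy Psi0 = 0).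
Local Notation P t := (Psi_t Psi0 t).
Local Notation fades e := (vanishing (fun t => normc (P t e))).

Lemma fades_right_in k : fades (right_in k).
Proof.
have := sqnorm_fin_vanishing right_in_inj fin; rewrite vanishing_sqabs -(vanishing_shift k).
by apply: vanishing_le => t; rewrite Psi_t_right_in addnC.
Qed.

Lemma fades_left_in k : fades (left_in k).
Proof.
have := sqnorm_fin_vanishing left_in_inj fin; rewrite vanishing_sqabs -(vanishing_shift k).
by apply: vanishing_le => t; rewrite Psi_t_left_in addnC.
Qed.

Lemma fades_hub_right : fades hub_right.
Proof.
apply/(vanishing_shift 1); apply: vanishing_le (fades_right_in 0) => t.
by rewrite addn1 Psi_t_hub_right Psi_t_right_in.
Qed.

Lemma fades_hub_left : fades hub_left.
Proof.
apply/(vanishing_shift 1); apply: vanishing_le (fades_left_in 0) => t.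
by rewrite addn1 Psi_t_hub_left Psi_t_left_in.
Qed.

Lemma cycle_rev_eq t j : P t (tnth cbar_cycle j) = P t (tnth c_cycle j).
Proof.
have /cycle_energy_eq0 d0 : cycle_energy (P t) = 0 by rewrite cycle_energy_Psi_t.
by apply/esym/subr0_eq; exact: d0.
Qed.

Lemma cycle_step t :
  [/\ P t.+1 a1 = P t a2, P t.+1 a2 = (P t a3 + 2%:R * P t hub_right) / 3%:R,
      P t.+1 a3 = P t a4 & P t.+1 a4 = (P t a1 + 2%:R * P t hub_left) / 3%:R].
Proof.
have b1E : P t b1 = P t a1.
  by have := cycle_rev_eq t ord0; rewrite c_cycleE cbar_cycleE; apply.
have b3E : P t b3 = P t a3.
  by have := cycle_rev_eq t (@Ordinal 4 2 isT); rewrite c_cycleE cbar_cycleE; apply.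
rewrite !Psi_tS grover_a1 grover_a2 grover_a3 grover_a4 b3E b1E.
by split => //; field.
Qed.

Definition cycle_norm t := normc (P t a1) + normc (P t a2) + normc (P t a3) + normc (P t a4).

Lemma cycle_norm_rec t : 3%:R * cycle_norm t.+2 <= cycle_norm t +
  2%:R * (normc (P t hub_right) + normc (P t.+1 hub_right) +
          normc (P t hub_left) + normc (P t.+1 hub_left)).
Proof.
rewrite /cycle_norm.
have [s1 s2 s3 s4] := cycle_step t; have [s1' s2' s3' s4'] := cycle_step t.+1.
rewrite s1' s2' s3' s4' s1 s2 s3 s4.
have := normc_avg3 (P t a3) (P t hub_right); have := normc_avg3 (P t a4) (P t.+1 hub_right).
have := normc_avg3 (P t a1) (P t hub_left); have := normc_avg3 (P t a2) (P t.+1 hub_left).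
lra.
Qed.

Lemma vanishing_inflow : vanishing (fun t => 2%:R * (normc (P t hub_right) +
  normc (P t.+1 hub_right) + normc (P t hub_left) + normc (P t.+1 hub_left))).
Proof.
have fades_next e : fades e -> vanishing (fun t => normc (P t.+1 e)).
  by move=> /(proj2 (vanishing_shift 1 _)); apply: vanishing_le => t; rewrite addn1.
apply: vanishingZ => //; apply: vanishingD (fades_next _ fades_hub_left).
apply: vanishingD fades_hub_left.
exact: vanishingD fades_hub_right (fades_next _ fades_hub_right).
Qed.

Lemma vanishing_cycle_norm : vanishing cycle_norm.
Proof.
apply: vanishing_rec2 vanishing_inflow => [t|]; last exact: cycle_norm_rec.
by rewrite /cycle_norm !addr_ge0 ?normc_ge0.
Qed.

Lemma fades_c_cycle j : fades (tnth c_cycle j).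
Proof.
apply: vanishing_le vanishing_cycle_norm => t; rewrite /cycle_norm c_cycleE.
have := normc_ge0 (P t a1); have := normc_ge0 (P t a2).
have := normc_ge0 (P t a3); have := normc_ge0 (P t a4).
by case: j => -[|[|[|[|//]]]] ? /=; lra.
Qed.

Lemma fades_cbar_cycle j : fades (tnth cbar_cycle j).
Proof. by apply: vanishing_le (fades_c_cycle j) => t; rewrite cycle_rev_eq. Qed.

Lemma fades_right_out k : fades (right_out k).
Proof.
have fades_a3 : fades a3 by have := fades_c_cycle (@Ordinal 4 2 isT); rewrite c_cycleE.
have fades_b3 : fades b3 by have := fades_cbar_cycle (@Ordinal 4 2 isT); rewrite cbar_cycleE.
elim: k => [|k IH]; apply/(vanishing_shift 1).
  apply: vanishing_le (vanishingD (vanishingD fades_hub_right fades_b3) fades_a3) => t.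
  by rewrite addn1 Psi_tS grover_right_out0; exact: normc_scatter3.
by apply: vanishing_le IH => t; rewrite addn1 Psi_tS grover_right_out.
Qed.

Lemma fades_left_out k : fades (left_out k).
Proof.
have fades_a1 : fades a1 by have := fades_c_cycle ord0; rewrite c_cycleE.
have fades_b1 : fades b1 by have := fades_cbar_cycle ord0; rewrite cbar_cycleE.
elim: k => [|k IH]; apply/(vanishing_shift 1).
  apply: vanishing_le (vanishingD (vanishingD fades_hub_left fades_a1) fades_b1) => t.
  by rewrite addn1 Psi_tS grover_left_out0; exact: normc_scatter3.
by apply: vanishing_le IH => t; rewrite addn1 Psi_tS grover_left_out.
Qed.

Lemma vanishing_probX x : vanishing (fun t => probX Psi0 t x).
Proof.
have sq e : fades e -> vanishing (fun t => sqabs (P t e)) by rewrite vanishing_sqabs.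
case: x => [[|k]|k].
- have cyc j := vanishingD (sq _ (fades_c_cycle j)) (sq _ (fades_cbar_cycle j)).
  apply: vanishing_le (vanishingD (vanishing_sum cyc)
    (vanishingD (sq _ fades_hub_right) (sq _ fades_hub_left))) => t.
  by rewrite probX_hub.
- apply: vanishing_le (vanishingD (sq _ (fades_right_in k)) (sq _ (fades_right_out k))) => t.
  by rewrite probX_pos.
- apply: vanishing_le (vanishingD (sq _ (fades_left_in k)) (sq _ (fades_left_out k))) => t.
  by rewrite probX_neg.
Qed.
End ZeroCycleEnergy.

Theorem theorem1p2 (R : realType) (Psi0 : state R) :
  sqnorm Psi0 = 1%E ->
  (localization Psi0 <-> ~ inGamma_perp Psi0).
Proof.
move=> norm1; have fin : (sqnorm Psi0 < +oo)%E by rewrite norm1 ltry.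
rewrite perp_GammaP -cycle_energy_eq0; split.
- move=> [j loc] E0; have := vanishing_limn_esup (vanishing_probX fin E0 j).
  by rewrite leNgt loc.
- move=> E_neq0; have E_gt0 : 0 < cycle_energy Psi0.
    by rewrite lt_def cycle_energy_ge0 andbT; apply/eqP.
  exists 0; apply: lt_le_trans (limn_esup_ge (c := cycle_energy Psi0 / 2%:R) _).
    by rewrite lte_fin divr_gt0.
  by move=> t; have := cycle_energy_le_probX Psi0 t; rewrite cycle_energy_Psi_t; lra.
Qed.
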